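(* Consider the problem of minimizing $f(x)+h(x)$ subject to $Ax=b$, with $A\in\mathbb R^{m\times n}$, $A\neq0$, $b\in\mathbb R^m$, and the setting below. Run the following Bregman dual Condat--V\~u algorithm with line search: choose $x^{(0)}\in\operatorname{int}(\operatorname{dom}\phi_{\mathrm p})\cap\operatorname{dom}h$, $z^{(-1)}=z^{(0)}\in\mathbb R^m$, $\tau_{-1},\sigma_{-1}>0$ and $\delta\in(0,1]$, and set $\beta=\sigma_{-1}/\tau_{-1}$. At iteration $k\ge0$, choose $\bar\theta_k\ge1$; for $i=0,1,2,\dots$ set $\theta_k=2^{-i}\bar\theta_k$, $\tau_k=\theta_k\tau_{k-1}$, $\sigma_k=\theta_k\sigma_{k-1}$, and compute \[\bar z^{(k+1)}=z^{(k)}+\theta_k(z^{(k)}-z^{(k-1)}),\quad x^{(k+1)}=\mathrm{prox}^{\phi_{\mathrm p}}_{\tau_kf}\big(x^{(k)},\tau_k(A^T\bar z^{(k+1)}+\nabla h(x^{(k)}))\big),\quad z^{(k+1)}=z^{(k)}+\sigma_k(Ax^{(k+1)}-b);\] accept these iterates and parameters (and stop the inner loop) as soon as \[\langle z^{(k+1)}-\bar z^{(k+1)},A(x^{(k+1)}-x^{(k)})\rangle+h(x^{(k+1)})-h(x^{(k)})-\langle\nabla h(x^{(k)}),x^{(k+1)}-x^{(k)}\rangle\le\frac{\delta^2}{\tau_k}d_{\mathrm p}(x^{(k+1)},x^{(k)})+\frac1{2\sigma_k}\|\bar z^{(k+1)}-z^{(k+1)}\|^2 .\] Then at every iteration the backtracking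 terminates, and the accepted stepsizes satisfy, for all $k\ge0$, \[\tau_k\ge\tau_{\min}:=\min\Big\{\tau_{-1},\ \frac{-L+\sqrt{L^2+4\delta^2\beta\|A\|^2}}{4\beta\|A\|^2}\Big\},\qquad\sigma_k\ge\sigma_{\min}:=\beta\tau_{\min}.\]
   Context: $f:\mathbb R^n\to\mathbb R\cup\{+\infty\}$ and $h$ are closed convex, $h$ differentiable on its open convex domain, $f+h$ proper. A Bregman kernel $\phi_{\mathrm p}$ on $\mathbb R^n$ is convex with $\operatorname{int}(\operatorname{dom}\phi_{\mathrm p})\ne\emptyset$, continuous on its domain, continuously differentiable on the interior; $d_{\mathrm p}(x,y)=\phi_{\mathrm p}(x)-\phi_{\mathrm p}(y)-\langle\nabla\phi_{\mathrm p}(y),x-y\rangle$ on $\operatorname{dom}\phi_{\mathrm p}\times\operatorname{int}(\operatorname{dom}\phi_{\mathrm p})$, with $d_{\mathrm p}(x,x')\ge\frac12\|x-x'\|_{\mathrm p}^2$ for a norm $\|\cdot\|_{\mathrm p}$. $\mathrm{prox}^{\phi_{\mathrm p}}_F(y,a)=\operatorname{argmin}_x\big(F(x)+\langle a,x\rangle+d_{\mathrm p}(x,y)\big)$, assumed to be a unique point of $\operatorname{int}(\operatorname{dom}\phi_{\mathrm p})$ for all $a$ and $y\in\operatorname{int}(\operatorname{dom}\phi_{\mathrm p})$. Also $\operatorname{dom}\phi_{\mathrm p}\subseteq\operatorname{dom}h$ and $h(x)-h(x')-\langle\nabla h(x'),x-x'\rangle\le L\,d_{\mathrm p}(x,x')$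 for all $(x,x')\in\operatorname{dom}d_{\mathrm p}$, for some $L>0$. $\|\cdot\|$ is the Euclidean norm and $\|A\|=\sup_{u\ne0}\|Au\|/\|u\|_{\mathrm p}$. *)

From HB Require Import structures.
From mathcomp Require Import all_boot all_order all_algebra.
From mathcomp Require Import all_classical all_reals all_analysis.
Set Implicit Arguments. Unset Strict Implicit. Unset Printing Implicit Defensive.
Import Order.TTheory GRing.Theory Num.Theory.
Import numFieldNormedType.Exports.
Local Open Scope classical_set_scope.
Local Open Scope ring_scope.

Section Defs.
Variable R : realType.

Definition dotp (p : nat) (u v : 'cV[R]_p) : R := (u^T *m v) 0 0.
Definition enorm (p : nat) (u : 'cV[R]_p) : R := Num.sqrt (dotp u u).

Definition is_norm (n : nat) (N : 'cV[R]_n -> R) : Prop :=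
  [/\ forall u, 0 <= N u,
      forall u, N u = 0 -> u = 0,
      forall (a : R) u, N (a *: u) = `|a| * N u
    & forall u v, N (u + v) <= N u + N v].

Definition opnorm (m n : nat) (N : 'cV[R]_n -> R) (A : 'M[R]_(m, n)) : R :=
  sup [set r | exists u : 'cV[R]_n, u != 0 /\ r = enorm (A *m u) / N u].

Definition cvx_set (n : nat) (D : set 'cV[R]_n) : Prop :=
  forall x y (t : R), D x -> D y -> 0 <= t <= 1 -> D (t *: x + (1 - t) *: y).

Definition convex_on (n : nat) (D : set 'cV[R]_n) (g : 'cV[R]_n -> R) : Prop :=
  cvx_set D /\
  forall x y (t : R), D x -> D y -> 0 <= t <= 1 ->
    g (t *: x + (1 - t) *: y) <= t * g x + (1 - t) * g y.

Definition no_minfty (n : nat) (F : 'cV[R]_n -> \bar R) : Prop :=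
  forall x, F x != -oo%E.

Definition convex_ext (n : nat) (F : 'cV[R]_n -> \bar R) : Prop :=
  forall x y (t : R), 0 <= t <= 1 -> (F x < +oo)%E -> (F y < +oo)%E ->
    (F (t *: x + (1 - t) *: y)%R <= t%:E * F x + (1 - t)%:E * F y)%E.

(* closed = lower semicontinuous = all sublevel sets closed *)
Definition closed_ext (n : nat) (F : 'cV[R]_n -> \bar R) : Prop :=
  forall a : R, closed [set x | (F x <= a%:E)%E].

Definition ext (n : nat) (D : set 'cV[R]_n) (g : 'cV[R]_n -> R) : 'cV[R]_n -> \bar R :=
  fun x => if x \in D then (g x)%:E else +oo%E.

Definition grad (n : nat) (g : 'cV[R]_n -> R) (x : 'cV[R]_n) : 'cV[R]_n :=
  \col_i ('d g x (delta_mx i 0)).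

Definition bdist (n : nat) (phi : 'cV[R]_n -> R) (x y : 'cV[R]_n) : R :=
  phi x - phi y - dotp (grad phi y) (x - y).

(* x is a minimizer of  t f(u) + <a,u> + d_p(u,y)  (over dom phi; the
   objective is +oo outside dom phi) *)
Definition is_prox (n : nat) (phi : 'cV[R]_n -> R) (Dphi : set 'cV[R]_n)
  (f : 'cV[R]_n -> \bar R) (t : R) (y a x : 'cV[R]_n) : Prop :=
  Dphi x /\
  forall u, Dphi u ->
    (t%:E * f x + (dotp a x + bdist phi x y)%R%:E <=
     t%:E * f u + (dotp a u + bdist phi u y)%R%:E)%E.

Definition trial_iter (m n : nat) (phi : 'cV[R]_n -> R) (Dphi : set 'cV[R]_n)
  (f : 'cV[R]_n -> \bar R) (gh : 'cV[R]_n -> 'cV[R]_n)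
  (A : 'M[R]_(m, n)) (b : 'cV[R]_m)
  (xk : 'cV[R]_n) (zk zkm1 : 'cV[R]_m) (tauprev sigprev theta : R)
  (zbar : 'cV[R]_m) (x1 : 'cV[R]_n) (z1 : 'cV[R]_m) (tau sigma : R) : Prop :=
  [/\ tau = theta * tauprev, sigma = theta * sigprev,
      zbar = zk + theta *: (zk - zkm1),
      is_prox phi Dphi f tau xk (tau *: (A^T *m zbar + gh xk)) x1
    & z1 = zk + sigma *: (A *m x1 - b)].

Definition accept_test (m n : nat) (phi : 'cV[R]_n -> R) (hv : 'cV[R]_n -> R)
  (gh : 'cV[R]_n -> 'cV[R]_n) (A : 'M[R]_(m, n)) (delta : R)
  (xk : 'cV[R]_n) (zbar : 'cV[R]_m) (x1 : 'cV[R]_n) (z1 : 'cV[R]_m)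
  (tau sigma : R) : Prop :=
  dotp (z1 - zbar) (A *m (x1 - xk)) + hv x1 - hv xk - dotp (gh xk) (x1 - xk)
  <= delta ^+ 2 / tau * bdist phi x1 xk + (2 * sigma)^-1 * (enorm (zbar - z1)) ^+ 2.

(* previous-index helpers: z^{(k-1)} with z^{(-1)} = z^{(0)},
   tau_{k-1} with tau_{-1} given *)
Definition prevz (m : nat) (z : nat -> 'cV[R]_m) (k : nat) : 'cV[R]_m :=
  if k is k'.+1 then z k' else z 0%N.
Definition prevr (r : nat -> R) (rm1 : R) (k : nat) : R :=
  if k is k'.+1 then r k' else rm1.

(* The sequences form a run of the algorithm for iterations k = 0..K-1:
   x k = x^(k), z k = z^(k), zbar (k+1) = zbar^(k+1),
   tau k = tau_k, sigma k = sigma_k, theta k = theta_k, thetabar k. *)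
Definition valid_run (m n : nat) (phi : 'cV[R]_n -> R) (Dphi : set 'cV[R]_n)
  (f : 'cV[R]_n -> \bar R) (hv : 'cV[R]_n -> R) (gh : 'cV[R]_n -> 'cV[R]_n)
  (A : 'M[R]_(m, n)) (b : 'cV[R]_m) (delta taum1 sigm1 : R) (K : nat)
  (x : nat -> 'cV[R]_n) (z zbar : nat -> 'cV[R]_m)
  (tau sigma theta thetabar : nat -> R) : Prop :=
  forall k, (k < K)%N ->
    1 <= thetabar k /\
    exists i : nat,
      [/\ theta k = (2 ^+ i)^-1 * thetabar k,
          trial_iter phi Dphi f gh A b (x k) (z k) (prevz z k)
            (prevr tau taum1 k) (prevr sigma sigm1 k) (theta k)
            (zbar k.+1) (x k.+1) (z k.+1) (tau k) (sigma k),
          accept_test phi hv gh A delta (x k) (zbar k.+1) (x k.+1) (z k.+1)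
            (tau k) (sigma k)
        & forall j : nat, (j < i)%N ->
            forall zb x1 z1 t s,
              trial_iter phi Dphi f gh A b (x k) (z k) (prevz z k)
                (prevr tau taum1 k) (prevr sigma sigm1 k)
                ((2 ^+ j)^-1 * thetabar k) zb x1 z1 t s ->
              ~ accept_test phi hv gh A delta (x k) zb x1 z1 t s].

End Defs.

From HB Require Import structures.
From mathcomp Require Import all_boot all_order all_algebra.
From mathcomp Require Import all_classical all_reals all_analysis.
From mathcomp Require Import ring lra.
Import Order.TTheory GRing.Theory Num.Theory.
Import numFieldNormedType.Exports.
Local Open Scope classical_set_scope.
Local Open Scope ring_scope.

Set Implicit Arguments.
Unset Strict Implicit.
Unset Printing Implicit Defensive.

(* Write d = x^(k+1) - x^(k) and w = z^(k+1) - zbar^(k+1).  Young's inequality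
   with weight sigma_k, the bound |A d| <= ||A|| ||d||_p <= ||A|| sqrt (2 d_p)
   and the relative smoothness of h bound the left-hand side of the acceptance
   test by |w|^2 / (2 sigma_k) + (sigma_k ||A||^2 + L) d_p(x^(k+1), x^(k)).
   Since sigma_k = beta tau_k along the run, a trial is accepted as soon as
   beta ||A||^2 tau_k^2 + L tau_k <= delta^2, i.e. as soon as tau_k is below
   the positive root r of this quadratic, which is twice the second term of
   tau_min.  Halving reaches this bound, so the backtracking terminates; and
   the trial 2 tau_k preceding an accepted tau_k after a halving was rejected,
   so 2 tau_k > r.  Hence tau_k >= min (tau_(k-1), r / 2), and tau_k >= tau_min
   by induction.  That ||A|| is finite and positive rests on the equivalence
   of ||.||_p with the max norm, by compactness of the unit sphere. *)

Section EuclideanNorm.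
Variables (R : realType) (p : nat).
Implicit Types u v : 'cV[R]_p.

Lemma dotpE u v : dotp u v = \sum_i u i 0 * v i 0.
Proof. by rewrite /dotp !mxE; apply: eq_bigr => i _; rewrite !mxE. Qed.

Lemma dotpp_ge0 u : 0 <= dotp u u.
Proof. by rewrite dotpE; apply: sumr_ge0 => i _; rewrite -expr2 sqr_ge0. Qed.

Lemma enorm_ge0 u : 0 <= enorm u.
Proof. exact: sqrtr_ge0. Qed.

Lemma enorm_sqr u : enorm u ^+ 2 = dotp u u.
Proof. by rewrite sqr_sqrtr // dotpp_ge0. Qed.

Lemma enormN u : enorm (- u) = enorm u.
Proof.
by rewrite /enorm !dotpE; congr Num.sqrt; apply: eq_bigr => i _; rewrite !mxE mulrNN.
Qed.

Lemma enorm_eq0 u : (enorm u == 0) = (u == 0).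
Proof.
apply/idP/eqP => [|->]; last first.
  by rewrite /enorm dotpE big1 ?sqrtr0 // => i _; rewrite mxE mul0r.
rewrite sqrtr_eq0 => uu_le0.
have uu_ge0 i : true -> 0 <= u i 0 * u i 0 by rewrite -expr2 sqr_ge0.
have uu0 : \sum_i u i 0 * u i 0 = 0.
  by apply/eqP; rewrite eq_le -dotpE uu_le0 dotpp_ge0.
apply/matrixP => i j; rewrite ord1 mxE.
by have /eqP := psumr_eq0P uu_ge0 uu0 (i := i) isT; rewrite mulf_eq0 orbb => /eqP.
Qed.

Lemma enorm0 : enorm (0 : 'cV[R]_p) = 0.
Proof. by apply/eqP; rewrite enorm_eq0. Qed.

Lemma enorm_gt0 u : (0 < enorm u) = (u != 0).
Proof. by rewrite lt_def enorm_ge0 andbT enorm_eq0. Qed.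

Lemma dotp_young u v (s : R) : 0 < s ->
  dotp u v <= (2 * s)^-1 * enorm u ^+ 2 + s / 2 * enorm v ^+ 2.
Proof.
move=> s_gt0; rewrite !enorm_sqr !dotpE !mulr_sumr -big_split /=.
apply: ler_sum => i _; set a := u i 0; set c := v i 0.
have -> : (2 * s)^-1 * (a * a) + s / 2 * (c * c) = (a * a + s * s * (c * c)) / (2 * s).
  by field; rewrite gt_eqF.
rewrite ler_pdivlMr ?mulr_gt0 //.
have := sqr_ge0 (a - s * c); rewrite expr2; nra.
Qed.

End EuclideanNorm.

Section MaxNorm.
Variable R : realType.

Lemma mxentry_le_norm p q (M : 'M[R]_(p, q)) i j : `|M i j| <= `|M|.
Proof.
rewrite [leRHS]/Num.Def.normr /= mx_normrE.
exact: (le_bigmax _ (fun ij : 'I_p * 'I_q => `|M ij.1 ij.2|) (i, j)).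
Qed.

Lemma cVentry_le_norm p (u : 'cV[R]_p) i : `|u i 0| <= `|u^T|.
Proof. by have := mxentry_le_norm u^T 0 i; rewrite mxE. Qed.

Lemma enorm_mulmx_le m n (A : 'M[R]_(m, n)) :
  exists2 M, 0 <= M & forall u, enorm (A *m u) <= M * `|u^T|.
Proof.
exists (Num.sqrt (\sum_i (\sum_j `|A i j|) ^+ 2)); first exact: sqrtr_ge0.
move=> u; rewrite -[`|u^T|]ger0_norm // -sqrtr_sqr -sqrtrM; last first.
  by apply: sumr_ge0 => i _; rewrite sqr_ge0.
rewrite ler_sqrt ?mulr_ge0 ?sqr_ge0 ?sumr_ge0 // => [|i _]; last by rewrite sqr_ge0.
rewrite dotpE mulr_suml; apply: ler_sum => i _.
have Au_le : `|(A *m u) i 0| <= (\sum_j `|A i j|) * `|u^T|.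
  rewrite mxE mulr_suml; apply: le_trans (ler_norm_sum _ _ _) _.
  by apply: ler_sum => j _; rewrite normrM ler_wpM2l ?cVentry_le_norm.
rewrite -expr2 -real_normK ?num_real // -exprMn.
by rewrite lerXn2r ?nnegrE ?mulr_ge0 ?sumr_ge0.
Qed.

End MaxNorm.

Section NormEquivalence.
Variables (R : realType) (n : nat) (Np : 'cV[R]_n -> R).
Hypothesis Np_norm : is_norm Np.
Implicit Types u v : 'cV[R]_n.

Lemma is_norm_ge0 u : 0 <= Np u.
Proof. by case: Np_norm. Qed.

Lemma is_normZ a u : Np (a *: u) = `|a| * Np u.
Proof. by case: Np_norm. Qed.

Lemma is_norm0 : Np 0 = 0.
Proof. by have := is_normZ 0 0; rewrite scale0r normr0 mul0r. Qed.

Lemma is_normN u : Np (- u) = Np u.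
Proof. by rewrite -scaleN1r is_normZ normrN1 mul1r. Qed.

Lemma is_norm_gt0 u : u != 0 -> 0 < Np u.
Proof.
case: Np_norm => _ Np_eq0 _ _ u0; rewrite lt_def is_norm_ge0 andbT.
by apply: contra u0 => /eqP/Np_eq0 ->.
Qed.

Lemma is_norm_sum k (F : 'I_k -> 'cV[R]_n) : Np (\sum_i F i) <= \sum_i Np (F i).
Proof.
case: Np_norm => _ _ _ NpD.
elim/big_rec2: _ => [|i u r _ IH]; first by rewrite is_norm0.
by apply: le_trans (NpD _ _) _; rewrite lerD2l.
Qed.

Lemma is_norm_dist u v : `|Np u - Np v| <= Np (u - v).
Proof.
case: Np_norm => _ _ _ NpD; rewrite ler_norml.
have := NpD (v - u) u; have := NpD (u - v) v.
by rewrite !subrK -[v - u]opprB is_normN => ? ?; apply/andP; split; lra.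
Qed.

Lemma is_norm_le_mx_norm : exists2 C, 0 <= C & forall u, Np u <= C * `|u^T|.
Proof.
exists (\sum_i Np (delta_mx i 0)) => [|u].
  by apply: sumr_ge0 => i _; exact: is_norm_ge0.
rewrite [in Np u](matrix_sum_delta u).
under eq_bigr do rewrite big_ord1.
apply: le_trans (is_norm_sum _) _; rewrite mulr_suml; apply: ler_sum => i _.
by rewrite is_normZ mulrC ler_wpM2l ?is_norm_ge0 ?cVentry_le_norm.
Qed.

Lemma is_norm_continuous : continuous (fun v : 'rV[R]_n => Np v^T).
Proof.
have [C C_ge0 NpC] := is_norm_le_mx_norm.
move=> v; apply/(@cvgrPdist_lt _ _ _ (nbhs v) (nbhs_filter v)) => e e_gt0.
have eC_gt0 : 0 < e / (C + 1) by rewrite divr_gt0 // ltr_wpDl.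
near=> w.
apply: le_lt_trans (is_norm_dist _ _) _; rewrite -linearB /=.
apply: le_lt_trans (NpC _) _; rewrite trmxK.
have : `|v - w| < e / (C + 1).
  by near: w; exact: (@cvgr_dist_lt _ _ _ (nbhs v) (nbhs_filter v) id v cvg_id _ eC_gt0).
rewrite ltr_pdivlMr ?ltr_wpDl //; apply: le_lt_trans.
by rewrite mulrC ler_wpM2l ?lerDl.
Unshelve. all: by end_near.
Qed.

Lemma is_norm_ge_mx_norm : exists2 c, 0 < c & forall u, c * `|u^T| <= Np u.
Proof.
pose S := [set v : 'rV[R]_n | `|v| = 1].
have sphere_bound (c : R) u :
    (forall v : 'rV[R]_n, S v -> c <= Np v^T) -> c * `|u^T| <= Np u.
  move=> cS; have [->|u0] := eqVneq u^T 0; first by rewrite normr0 mulr0 is_norm_ge0.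
  have uT_gt0 : 0 < `|u^T| by rewrite normr_gt0.
  have := cS (`|u^T|^-1 *: u^T).
  rewrite /S /= normrZ ger0_norm ?invr_ge0 // mulVf ?gt_eqF // => /(_ erefl).
  by rewrite linearZ /= trmxK is_normZ ger0_norm ?invr_ge0 // ler_pdivlMl // mulrC.
have [[v0 Sv0]|noS] := pselect (exists v : 'rV[R]_n, S v); last first.
  by exists 1 => // u; apply: sphere_bound => v Sv; case: noS; exists v.
have S_compact : compact S.
  apply: bounded_closed_compact.
    rewrite /bounded_set /= /bounded_near; near=> M => v Sv /=; rewrite Sv.
    by near: M; apply: nbhs_pinfty_ge.
  have := @preimage_closed _ _ (fun v : 'rV[R]_n => `|v|) [set 1].
  by apply=> [v _|]; [exact: norm_continuous | exact: closed_eq].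
have [c Sc c_min] := compact_EVT_min (ex_intro _ v0 Sv0) S_compact
  (continuous_subspaceT is_norm_continuous).
exists (Np c^T); last by move=> u; apply: sphere_bound => v Sv; apply: c_min; rewrite inE.
apply: is_norm_gt0; apply/eqP => /(congr1 trmx); rewrite trmxK trmx0 => c0.
by move: Sc; rewrite inE /S /= c0 normr0 => /eqP; rewrite eq_sym oner_eq0.
Unshelve. all: by end_near.
Qed.

End NormEquivalence.

Lemma matrix_nz_col (R : nmodType) m n (A : 'M[R]_(m, n)) :
  A != 0 -> exists j, col j A != 0.
Proof.
move=> A0; suff /existsP[j ?] : [exists j, col j A != 0] by exists j.
apply: contraNT A0 => /existsPn no_col; apply/eqP/matrixP => i j.
by have /negPn/eqP/matrixP/(_ i 0) := no_col j; rewrite !mxE.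
Qed.

Section OperatorNorm.
Variables (R : realType) (m n : nat) (Np : 'cV[R]_n -> R) (A : 'M[R]_(m, n)).
Hypotheses (Np_norm : is_norm Np) (A_neq0 : A != 0).

Let ratios_has_sup :
  has_sup [set r | exists u : 'cV[R]_n, u != 0 /\ r = enorm (A *m u) / Np u].
Proof.
have [j Aj] := matrix_nz_col A_neq0.
have [c c_gt0 Npc] := is_norm_ge_mx_norm Np_norm.
have [M M_ge0 AM] := enorm_mulmx_le A.
split.
  exists (enorm (A *m delta_mx j 0) / Np (delta_mx j 0)), (delta_mx j 0).
  by split=> //; apply: contraNneq Aj => e0; rewrite colE e0 mulmx0.
exists (M / c) => _ [u [u0 ->]].
rewrite ler_pdivrMr ?is_norm_gt0 // mulrAC ler_pdivlMr //.
apply: le_trans (ler_wpM2r (ltW c_gt0) (AM u)) _.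
by rewrite -mulrA ler_wpM2l // mulrC Npc.
Qed.

Lemma opnorm_ge u : enorm (A *m u) <= opnorm Np A * Np u.
Proof.
have [->|u0] := eqVneq u 0; first by rewrite mulmx0 (is_norm0 Np_norm) mulr0 enorm0.
rewrite -ler_pdivrMr ?is_norm_gt0 //.
by apply: sup_upper_bound ratios_has_sup _ _; exists u.
Qed.

Lemma opnorm_gt0 : 0 < opnorm Np A.
Proof.
have [j Aj] := matrix_nz_col A_neq0.
have e0 : delta_mx j 0 != 0 :> 'cV[R]_n.
  by apply: contraNneq Aj => e0; rewrite colE e0 mulmx0.
apply: (@lt_le_trans _ _ (enorm (A *m delta_mx j 0) / Np (delta_mx j 0))).
  by apply: divr_gt0; [rewrite enorm_gt0 -colE | exact: is_norm_gt0].
by apply: sup_upper_bound ratios_has_sup _ _; exists (delta_mx j 0).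
Qed.

End OperatorNorm.

Definition pos_root (R : rcfType) (a L c : R) :=
  (- L + Num.sqrt (L ^+ 2 + 4 * a * c)) / (2 * a).

Lemma pos_root_gt0 (R : rcfType) (a L c : R) : 0 < a -> 0 <= L -> 0 < c ->
  0 < pos_root a L c.
Proof.
move=> a_gt0 L_ge0 c_gt0; apply: divr_gt0; last by rewrite mulr_gt0.
have ac_gt0 : 0 < 4 * a * c by rewrite !mulr_gt0.
have L2_ge0 : 0 <= L ^+ 2 := sqr_ge0 L.
rewrite addrC subr_gt0 -[ltLHS]ger0_norm // -sqrtr_sqr.
by rewrite ltr_sqrt ?ltrDl //; lra.
Qed.

Lemma quadratic_le_of_le_pos_root (R : rcfType) (a L c t : R) :
  0 < a -> 0 <= L -> 0 <= c -> 0 <= t ->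
  t <= pos_root a L c -> a * t ^+ 2 + L * t <= c.
Proof.
move=> a_gt0 L_ge0 c_ge0 t_ge0; rewrite /pos_root ler_pdivlMr ?mulr_gt0 // => t_le.
set S := Num.sqrt _ in t_le.
have S2 : S ^+ 2 = L ^+ 2 + 4 * a * c.
  by rewrite sqr_sqrtr // addr_ge0 ?sqr_ge0 // !mulr_ge0 // ltW.
have lhs_ge0 : 0 <= 2 * a * t + L by have := mulr_ge0 (ltW a_gt0) t_ge0; lra.
have : (2 * a * t + L) ^+ 2 <= S ^+ 2.
  by rewrite ler_sqr ?nnegrE ?sqrtr_ge0 //; lra.
rewrite S2 => sq_le.
have : 4 * a * (a * t ^+ 2 + L * t) <= 4 * a * c by nra.
by rewrite ler_pM2l ?mulr_gt0.
Qed.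

Lemma exists_halving_le (R : archiRealFieldType) (x y : R) : 0 < y ->
  exists i, (2 ^+ i)^-1 * x <= y.
Proof.
move=> y_gt0; have [i x_lt] : exists i, x / y < 2 ^+ i.
  by eexists; exact: upper_nthrootP (leqnn _).
exists i; rewrite mulrC ler_pdivrMr ?exprn_gt0 // mulrC.
by rewrite ltr_pdivrMr // in x_lt; exact: ltW.
Qed.

Section LineSearch.
Variables (R : realType) (m n : nat).
Variables (phi : 'cV[R]_n -> R) (Dphi : set 'cV[R]_n) (f : 'cV[R]_n -> \bar R).
Variables (hv : 'cV[R]_n -> R) (gh : 'cV[R]_n -> 'cV[R]_n) (Np : 'cV[R]_n -> R).
Variables (A : 'M[R]_(m, n)) (b : 'cV[R]_m) (L delta : R).
Hypothesis Np_norm : is_norm Np.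
Hypothesis dp_strong : forall x y, Dphi x -> interior Dphi y ->
  Np (x - y) ^+ 2 / 2 <= bdist phi x y.
Hypothesis h_rel_smooth : forall x x', Dphi x -> interior Dphi x' ->
  hv x - hv x' - dotp (gh x') (x - x') <= L * bdist phi x x'.
Hypothesis prox_ok : forall (t : R) (y a : 'cV[R]_n), 0 < t -> interior Dphi y ->
  exists x, [/\ is_prox phi Dphi f t y a x, interior Dphi x &
    forall x', is_prox phi Dphi f t y a x' -> x' = x].
Hypotheses (A_neq0 : A != 0) (L_gt0 : 0 < L).

Local Notation nA := (opnorm Np A).

Lemma trial_iter_exists xk zk zkm1 (tp sp theta : R) :
  interior Dphi xk -> 0 < theta * tp ->
  exists zb x1 z1,
    trial_iter phi Dphi f gh A b xk zk zkm1 tp sp theta zb x1 z1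
      (theta * tp) (theta * sp).
Proof.
move=> xk_int t_gt0; pose zb := zk + theta *: (zk - zkm1).
have [x1 [x1_prox _ _]] :=
  @prox_ok _ xk ((theta * tp) *: (A^T *m zb + gh xk)) t_gt0 xk_int.
by exists zb, x1, (zk + (theta * sp) *: (A *m x1 - b)).
Qed.

Lemma trial_iter_interior xk zk zkm1 tp sp theta zb x1 z1 (t s : R) :
  interior Dphi xk -> 0 < t ->
  trial_iter phi Dphi f gh A b xk zk zkm1 tp sp theta zb x1 z1 t s ->
  interior Dphi x1.
Proof.
move=> xk_int t_gt0 [_ _ _ x1_prox _].
have [x' [_ x'_int x'_uniq]] := @prox_ok _ xk (t *: (A^T *m zb + gh xk)) t_gt0 xk_int.
by rewrite (x'_uniq _ x1_prox).
Qed.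

Lemma accept_test_of_le_pos_root xk zk zkm1 tp sp theta zb x1 z1 (beta t s : R) :
  0 < beta -> interior Dphi xk -> 0 < t -> s = beta * t ->
  t <= pos_root (beta * nA ^+ 2) L (delta ^+ 2) ->
  trial_iter phi Dphi f gh A b xk zk zkm1 tp sp theta zb x1 z1 t s ->
  accept_test phi hv gh A delta xk zb x1 z1 t s.
Proof.
move=> beta_gt0 xk_int t_gt0 -> t_le [_ _ _ [x1_dom _] _].
have s_gt0 : 0 < beta * t by rewrite mulr_gt0.
have nA_gt0 := opnorm_gt0 Np_norm A_neq0.
have quad : beta * nA ^+ 2 * t ^+ 2 + L * t <= delta ^+ 2.
  apply: quadratic_le_of_le_pos_root t_le; rewrite ?sqr_ge0 ?ltW //.
  by rewrite mulr_gt0 // exprn_gt0.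
rewrite /accept_test -[zb - z1]opprB enormN.
set d := x1 - xk; set w := z1 - zb; set D := bdist phi x1 xk.
have strong : Np d ^+ 2 / 2 <= D := dp_strong x1_dom xk_int.
have smooth : hv x1 - hv xk - dotp (gh xk) d <= L * D := h_rel_smooth x1_dom xk_int.
have young := dotp_young w (A *m d) s_gt0.
have D_ge0 : 0 <= D by apply: le_trans strong; rewrite divr_ge0 ?sqr_ge0.
have Ad_le : enorm (A *m d) ^+ 2 <= nA ^+ 2 * Np d ^+ 2.
  by rewrite -exprMn !expr2 ler_pM ?enorm_ge0 // opnorm_ge.
have coupling : beta * t / 2 * enorm (A *m d) ^+ 2 <= beta * t * nA ^+ 2 * D.
  apply: (@le_trans _ _ (beta * t / 2 * (nA ^+ 2 * Np d ^+ 2))).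
    by rewrite ler_wpM2l // divr_ge0 // ltW.
  have -> : beta * t / 2 * (nA ^+ 2 * Np d ^+ 2) = beta * t * nA ^+ 2 * (Np d ^+ 2 / 2).
    by ring.
  by rewrite ler_wpM2l // mulr_ge0 ?sqr_ge0 // ltW.
have coef : (beta * t * nA ^+ 2 + L) * D <= delta ^+ 2 / t * D.
  rewrite ler_wpM2r // ler_pdivlMr //.
  by have -> : (beta * t * nA ^+ 2 + L) * t = beta * nA ^+ 2 * t ^+ 2 + L * t by ring.
lra.
Qed.

Variables (taum1 sigm1 : R) (K : nat).
Variables (x : nat -> 'cV[R]_n) (z zbar : nat -> 'cV[R]_m).
Variables (tau sigma theta thetabar : nat -> R).
Hypotheses (delta_gt0 : 0 < delta) (taum1_gt0 : 0 < taum1) (sigm1_gt0 : 0 < sigm1).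
Hypothesis x0_int : interior Dphi (x 0).
Hypothesis run : valid_run phi Dphi f hv gh A b delta taum1 sigm1 K
  x z zbar tau sigma theta thetabar.

Local Notation beta := (sigm1 / taum1).
Local Notation tau_prev := (prevr tau taum1).
Local Notation sigma_prev := (prevr sigma sigm1).
Local Notation root := (pos_root (beta * nA ^+ 2) L (delta ^+ 2)).

Let beta_gt0 : 0 < beta.
Proof. exact: divr_gt0. Qed.

Let root_gt0 : 0 < root.
Proof.
have nA_gt0 := opnorm_gt0 Np_norm A_neq0.
apply: pos_root_gt0; last exact: exprn_gt0.
  by rewrite mulr_gt0 // exprn_gt0.
exact: ltW.
Qed.

Let trial_theta_gt0 k j : (k < K)%N -> 0 < (2 ^+ j)^-1 * thetabar k.
Proof.
move=> lt_kK; have [thetabar_ge1 _] := run lt_kK.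
by rewrite mulr_gt0 ?invr_gt0 ?exprn_gt0 // (lt_le_trans ltr01).
Qed.

Lemma valid_run_invariant k : (k <= K)%N ->
  [/\ interior Dphi (x k), 0 < tau_prev k & sigma_prev k = beta * tau_prev k].
Proof.
elim: k => [_|k IH lt_kK]; first by split; rewrite //= divfK ?gt_eqF.
have [xk_int tau_prev_gt0 sigma_prev_eq] := IH (ltnW lt_kK).
have [_ [i [theta_eq trial _ _]]] := run lt_kK.
have tau_gt0 : 0 < tau k.
  by case: trial => -> *; rewrite mulr_gt0 // theta_eq trial_theta_gt0.
split=> //=; first exact: trial_iter_interior trial.
by case: trial => -> -> *; rewrite sigma_prev_eq mulrCA.
Qed.

Lemma valid_run_tau_step k : (k < K)%N -> Num.min (tau_prev k) (root / 2) <= tau k.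
Proof.
move=> lt_kK; have [xk_int tau_prev_gt0 sigma_prev_eq] := valid_run_invariant (ltnW lt_kK).
have [thetabar_ge1 [[|i] [theta_eq [tau_eq _ _ _ _] _ rejected]]] := run lt_kK.
  by rewrite ge_min tau_eq theta_eq expr0 invr1 mul1r ler_peMl // ltW.
rewrite ge_min; apply/orP; right; rewrite leNgt; apply/negP => tau_small.
have t_gt0 : 0 < (2 ^+ i)^-1 * thetabar k * tau_prev k.
  by rewrite mulr_gt0 ?trial_theta_gt0.
have [zb [x1 [z1 trial]]] :=
  trial_iter_exists (z k) (prevz z k) (sigma_prev k) xk_int t_gt0.
apply: (rejected i (ltnSn i) _ _ _ _ _ trial).
apply: (accept_test_of_le_pos_root beta_gt0 xk_int t_gt0 _ _ trial) => //.
  by rewrite sigma_prev_eq mulrCA.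
have -> : (2 ^+ i)^-1 * thetabar k * tau_prev k = 2 * tau k.
  by rewrite tau_eq theta_eq exprS; field; rewrite expf_neq0.
by rewrite mulrC -ler_pdivlMr // ltW.
Qed.

Lemma valid_run_tau_prev_ge k : (k <= K)%N -> Num.min taum1 (root / 2) <= tau_prev k.
Proof.
elim: k => [|k IH lt_kK] /=; first by rewrite ge_min lexx.
apply: le_trans (valid_run_tau_step lt_kK).
by rewrite le_min IH ?(ltnW lt_kK) //= ge_min lexx orbT.
Qed.

Lemma valid_run_stepsizes_ge k : (k < K)%N ->
  Num.min taum1 (root / 2) <= tau k /\ beta * Num.min taum1 (root / 2) <= sigma k.
Proof.
move=> lt_kK; have /= tau_ge := valid_run_tau_prev_ge lt_kK.
have [_ _ /= ->] := valid_run_invariant lt_kK.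
by split=> //; rewrite ler_wpM2l // ltW.
Qed.

Lemma valid_run_backtracking_terminates tb : 1 <= tb ->
  exists (i : nat) zb x1 z1 t s,
    trial_iter phi Dphi f gh A b (x K) (z K) (prevz z K) (tau_prev K) (sigma_prev K)
      ((2 ^+ i)^-1 * tb) zb x1 z1 t s /\
    accept_test phi hv gh A delta (x K) zb x1 z1 t s.
Proof.
move=> tb_ge1; have [xK_int tau_prev_gt0 sigma_prev_eq] := valid_run_invariant (leqnn K).
have [i small] := exists_halving_le (tb * tau_prev K) root_gt0.
have t_gt0 : 0 < (2 ^+ i)^-1 * tb * tau_prev K.
  by rewrite !mulr_gt0 ?invr_gt0 ?exprn_gt0 // (lt_le_trans ltr01).
have [zb [x1 [z1 trial]]] :=
  trial_iter_exists (z K) (prevz z K) (sigma_prev K) xK_int t_gt0.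
exists i, zb, x1, z1, ((2 ^+ i)^-1 * tb * tau_prev K),
  ((2 ^+ i)^-1 * tb * sigma_prev K); split=> //.
apply: (accept_test_of_le_pos_root beta_gt0 xK_int t_gt0 _ _ trial) => //.
  by rewrite sigma_prev_eq mulrCA.
by rewrite -mulrA.
Qed.

End LineSearch.

Theorem mainTheorem6 (R : realType) (m n : nat)
  (f : 'cV[R]_n -> \bar R) (Dh : set 'cV[R]_n) (hv : 'cV[R]_n -> R)
  (phi : 'cV[R]_n -> R) (Dphi : set 'cV[R]_n) (Np : 'cV[R]_n -> R) (L : R)
  (A : 'M[R]_(m, n)) (b : 'cV[R]_m)
  (* f, h closed convex, with values in R \cup {+oo} *)
  (f_real : no_minfty f) (f_conv : convex_ext f) (f_closed : closed_ext f)
  (h_conv : convex_ext (ext Dh hv)) (h_closed : closed_ext (ext Dh hv))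
  (* h differentiable on its open convex domain *)
  (Dh_open : open Dh) (Dh_conv : cvx_set Dh)
  (h_diff : forall x, Dh x -> differentiable hv x)
  (* f + h proper *)
  (fh_proper : exists x, Dh x /\ (f x < +oo)%E)
  (* Bregman kernel *)
  (phi_conv : convex_on Dphi phi)
  (Dphi_int : exists x, (interior Dphi) x)
  (phi_cont : {within Dphi, continuous phi})
  (phi_diff : forall x, (interior Dphi) x -> differentiable phi x)
  (phi_C1 : {within interior Dphi, continuous (grad phi)})
  (Np_norm : is_norm Np)
  (dp_strong : forall x y, Dphi x -> (interior Dphi) y ->
     Np (x - y) ^+ 2 / 2 <= bdist phi x y)
  (* the prox is a unique point of int(dom phi), for every F = t f, t > 0 *)
  (prox_ok : forall (t : R) (y a : 'cV[R]_n), 0 < t -> (interior Dphi) y ->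
     exists x, [/\ is_prox phi Dphi f t y a x, (interior Dphi) x &
       forall x', is_prox phi Dphi f t y a x' -> x' = x])
  (Dphi_Dh : Dphi `<=` Dh)
  (L_pos : 0 < L)
  (h_rel_smooth : forall x x', Dphi x -> (interior Dphi) x' ->
     hv x - hv x' - dotp (grad hv x') (x - x') <= L * bdist phi x x')
  (A_neq0 : A != 0)
  (* algorithm parameters *)
  (delta taum1 sigm1 : R)
  (delta_pos : 0 < delta) (delta_le1 : delta <= 1)
  (taum1_pos : 0 < taum1) (sigm1_pos : 0 < sigm1)
  (K : nat) (x : nat -> 'cV[R]_n) (z zbar : nat -> 'cV[R]_m)
  (tau sigma theta thetabar : nat -> R)
  (x0_in : (interior Dphi) (x 0%N) /\ Dh (x 0%N))
  (run : valid_run phi Dphi f hv (grad hv) A b delta taum1 sigm1 K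
           x z zbar tau sigma theta thetabar) :
  let beta := sigm1 / taum1 in
  let nA := opnorm Np A in
  let tau_min := Num.min taum1
      ((- L + Num.sqrt (L ^+ 2 + 4 * delta ^+ 2 * beta * nA ^+ 2))
         / (4 * beta * nA ^+ 2)) in
  (* the backtracking at iteration K terminates, whatever thetabar_K >= 1 *)
  (forall tb : R, 1 <= tb ->
     exists (i : nat) zb x1 z1 t s,
       trial_iter phi Dphi f (grad hv) A b (x K) (z K) (prevz z K)
         (prevr tau taum1 K) (prevr sigma sigm1 K) ((2 ^+ i)^-1 * tb)
         zb x1 z1 t s /\
       accept_test phi hv (grad hv) A delta (x K) zb x1 z1 t s) /\
  (* lower bounds on the accepted stepsizes *)
  (forall k, (k < K)%N -> tau_min <= tau k /\ beta * tau_min <= sigma k).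
Proof.
move=> beta nA tau_min.
have -> : tau_min = Num.min taum1 (pos_root (beta * nA ^+ 2) L (delta ^+ 2) / 2).
  rewrite /tau_min /pos_root.
  have -> : 4 * delta ^+ 2 * beta * nA ^+ 2 = 4 * (beta * nA ^+ 2) * delta ^+ 2 by ring.
  have -> : 4 * beta * nA ^+ 2 = 2 * (beta * nA ^+ 2) * 2 by ring.
  by rewrite invfM; congr (Num.min _ _); ring.
split=> [tb|k].
  exact: (valid_run_backtracking_terminates Np_norm dp_strong h_rel_smooth prox_ok
    A_neq0 L_pos delta_pos taum1_pos sigm1_pos x0_in.1 run).
exact: (valid_run_stepsizes_ge Np_norm dp_strong h_rel_smooth prox_ok
  A_neq0 L_pos taum1_pos sigm1_pos x0_in.1 run).
Qed.
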